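(* Let $p$ be an odd prime and $n\ge1$ an integer, and let $K_n$ be the complete graph of order $n$. Put $q=\lfloor n/p\rfloor$, $r=n-qp$, $\psi=\max\{0,2r-p+1\}$, $\delta_s=1$ if $s$ is even and $0$ otherwise, and $\mathcal S=\mathcal S_1+\mathcal S_2$ with $$\mathcal S_1=\sum_{\substack{s=2\\ s\ne p}}^{r+1}(s-1-\delta_s)(s/p),\qquad \mathcal S_2=\sum_{\substack{s=r+2\\ s\ne p}}^{2r}(2r-s+1-\delta_s)(s/p).$$ Then $K_n$ is a Legendre cordial graph modulo $p$ if and only if $$\mathcal S=2nq-pq^2-q+\psi\quad\text{or}\quad \mathcal S=2nq-pq^2-q+\psi\pm2.$$
   Context: For an odd prime $p$ and an integer $a$ not divisible by $p$, $(a/p)$ denotes the Legendre symbol: $1$ if $a$ is a quadratic residue mod $p$, $-1$ otherwise. Empty sums equal $0$. For a simple connected graph $G$ of order $n$, a bijection $f:V(G)\to\{1,\dots,n\}$ is a Legendre cordial labeling modulo $p$ if the induced edge labeling $f_p^*:E(G)\to\{0,1\}$, defined by $f_p^*(uv)=0$ if $p\mid f(u)+f(v)$ or $((f(u)+f(v))/p)=-1$, and $f_p^*(uv)=1$ if $((f(u)+f(v))/p)=1$, satisfies $|e_{f_p^*}(0)-e_{f_p^*}(1)|\le1$, where $e_{f_p^*}(i)$ is the number of edges with label $i$. A graph admitting such a labeling is a Legendre cordial graph modulo $p$. *)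

From mathcomp Require Import all_boot all_order all_fingroup all_algebra.
Set Implicit Arguments. Unset Strict Implicit. Unset Printing Implicit Defensive.
Import Order.TTheory GRing.Theory Num.Theory.

Definition qres (p a : nat) : bool := [exists x : 'I_p, (x * x) %% p == a %% p].

Definition legendre (p a : nat) : int :=
  if p %| a then 0%R else if qres p a then 1%R else (-1)%R.

Definition simple_graph (n : nat) (e : rel 'I_n) : Prop :=
  irreflexive e /\ symmetric e.

(* Induced edge label f_p^*(uv) for the labeling f with values f u + 1 in
   {1..n}: 1 iff ((f u + f v)/p) = 1, else 0. *)
Definition edge_label (p n : nat) (f : {perm 'I_n}) (u v : 'I_n) : bool :=
  legendre p ((f u).+1 + (f v).+1) == 1%R.

Definition edge_count (p n : nat) (e : rel 'I_n) (f : {perm 'I_n}) (b : bool) : nat :=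
  #|[set uv : 'I_n * 'I_n | [&& uv.1 < uv.2, e uv.1 uv.2 & edge_label p f uv.1 uv.2 == b]]|.

Definition legendre_cordial_labeling (p n : nat) (e : rel 'I_n) (f : {perm 'I_n}) : bool :=
  (`|(edge_count p e f false)%:Z - (edge_count p e f true)%:Z| <= 1)%R.

Definition legendre_cordial (p n : nat) (e : rel 'I_n) : Prop :=
  exists f : {perm 'I_n}, legendre_cordial_labeling p e f.

Definition complete_graph (n : nat) : rel 'I_n := fun u v => u != v.

Definition delta (s : nat) : int := if odd s then 0%R else 1%R.

Definition S1 (p r : nat) : int :=
  (\sum_(2 <= s < r.+2 | s != p) ((s%:Z - 1 - delta s) * legendre p s))%R.

Definition S2 (p r : nat) : int :=
  (\sum_(r.+2 <= s < (2 * r).+1 | s != p)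
      (((2 * r)%:Z - s%:Z + 1 - delta s) * legendre p s))%R.
Arguments complete_graph n : clear implicits.

(* Every bijection of the vertices of K_n permutes its edges, so the induced
   edge sums {f u + f v} form the same multiset for all labelings and
   e(1) - e(0) does not depend on f: twice it is
   F(n) = sum over ordered pairs a <> b in [1, n] of sigma(a + b),
   where sigma(s) = 1 if (s/p) = 1 and -1 otherwise.  A complete residue
   system mod p holds (p - 1)/2 quadratic residues and (p + 1)/2 other
   classes, so sigma sums to -1 along any p terms of an arithmetic progression
   with step prime to p; this gives F(m + p) = F(m) - (2m + p) + 1, hence
   F(r + qp) = F(r) - 2rq - pq^2 + q.  For r < p, grouping pairs by their sum s
   turns F(r) into sum_s N_r(s) sigma(s) with the weights N_r(s) of S_1 and
   S_2; it differs from S only at s = p, where sigma(p) = -1 but (p/p) = 0,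
   and that correction is psi.  So S = X + F(n), and K_n is cordial iff
   F(n) is 0 or +-2. *)

From mathcomp Require Import all_boot all_order all_fingroup all_algebra.
From mathcomp Require Import zify ring.
Import Order.TTheory GRing.Theory Num.Theory.

Local Open Scope ring_scope.

Lemma sqrBn_mod m y : (y <= m)%N -> ((m - y) ^ 2 = y ^ 2 %[mod m])%N.
Proof.
move=> le_ym; rewrite -(modnMDl (2 * y)) -[(y ^ 2 %% m)%N](modnMDl m); congr (_ %% m)%N.
by move: (subnK le_ym); move: (m - y)%N => z <-; ring.
Qed.

Section PairSums.
Variable f : nat -> int.

Definition square_sum m := \sum_(a < m) \sum_(b < m) f (a.+1 + b.+1)%N.
Definition diag_sum m := \sum_(a < m) f (a.+1 + a.+1)%N.
Definition pair_sum m := \sum_(a < m) \sum_(b < m | a != b) f (a.+1 + b.+1)%N.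

Lemma pair_sumE m : pair_sum m = square_sum m - diag_sum m.
Proof.
rewrite -sumrB; apply: eq_bigr => a _.
by rewrite [in RHS](bigD1 a) //= addrAC subrr add0r; apply: eq_big => // b; rewrite eq_sym.
Qed.

Lemma pair_sumS m : pair_sum m.+1 = pair_sum m + 2 * \sum_(a < m) f (a.+1 + m.+1)%N.
Proof.
rewrite !pair_sumE /square_sum /diag_sum !big_ord_recr /=.
under eq_bigr do rewrite big_ord_recr /=.
have -> : \sum_(b < m) f (m.+1 + b.+1)%N = \sum_(b < m) f (b.+1 + m.+1)%N.
  by apply: eq_bigr => b _; rewrite addnC.
by rewrite big_split /=; ring.
Qed.
End PairSums.

(* For [2 <= s <= 2m + 1], the number of ordered pairs of distinct [a, b]
   in [[1, m]] with [a + b = s]. *)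
Definition pair_count (m s : nat) : int :=
  (if (s <= m.+1)%N then s%:Z - 1 else (2 * m)%:Z - s%:Z + 1) - delta s.

Lemma pair_countS m s : pair_count m.+1 s = pair_count m s + 2 * (m.+2 <= s)%N%:R.
Proof. by rewrite /pair_count; case: ltngtP => ? /=; case: ltngtP => ? /=; lia. Qed.

Lemma pair_count_top m : pair_count m (2 * m).+1 = 0.
Proof. by rewrite /pair_count /delta oddS oddM /=; case: leqP; lia. Qed.

Lemma pair_sum_count f m :
  pair_sum f m = \sum_(2 <= s < (2 * m).+2) pair_count m s * f s.
Proof.
elim: m => [|m IHm]; first by rewrite big_geq // /pair_sum big_ord0.
have -> : (2 * m.+1).+2 = (2 * m).+4 by lia.
rewrite pair_sumS IHm [in RHS]big_nat_recr // [in RHS]big_nat_recr //=.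
have -> : pair_count m.+1 (2 * m).+2 = 0.
  by rewrite /pair_count /delta !oddS oddM negbK /=; case: leqP; lia.
have -> : (2 * m).+3 = (2 * m.+1).+1 by lia.
have window : \sum_(2 <= s < (2 * m).+2) (m.+2 <= s)%N%:R * f s =
              \sum_(a < m) f (a.+1 + m.+1)%N.
  rewrite (big_cat_nat _ (n := m.+2)) //=; last by lia.
  rewrite big1_seq => [|s /andP[_]]; last first.
    by rewrite mem_index_iota => /andP[_]; rewrite ltnNge => /negbTE ->; rewrite mul0r.
  rewrite add0r -{1}[m.+2]add0n big_addn.
  have -> : ((2 * m).+2 - m.+2 = m)%N by lia.
  by rewrite big_mkord; apply: eq_bigr => a _; rewrite leq_addl mul1r addSnnS addnC.
under [in RHS]eq_bigr do rewrite pair_countS mulrDl -mulrA.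
by rewrite pair_count_top !mul0r !addr0 big_split -mulr_sumr window.
Qed.

Lemma sum_legendre_neq p m n (F : nat -> int) :
  \sum_(m <= s < n | s != p) F s * legendre p s = \sum_(m <= s < n) F s * legendre p s.
Proof.
rewrite [RHS](bigID (fun s => s != p)) /= [X in _ + X]big1 ?addr0 // => s /negPn /eqP ->.
by rewrite /legendre dvdnn mulr0.
Qed.

Lemma S1_add_S2 p r :
  S1 p r + S2 p r = \sum_(2 <= s < (2 * r).+2) pair_count r s * legendre p s.
Proof.
rewrite /S1 /S2 !sum_legendre_neq [RHS](big_cat_nat _ (n := r.+2)) //=; last by lia.
congr (_ + _).
  by apply: eq_big_nat => s /andP[_ s_lt]; rewrite /pair_count ifT.
case: r => [|r]; first by rewrite !big_geq.
rewrite [RHS]big_nat_recr /=; last by lia.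
rewrite pair_count_top mul0r addr0; apply: eq_big_nat => s /andP[s_ge _].
by rewrite /pair_count ifF //; apply/negbTE; rewrite -ltnNge.
Qed.

Definition label_sign (p s : nat) : int := if legendre p s == 1 then 1 else -1.

Section LabelSign.
Variable p : nat.
Hypotheses (p_prime : prime p) (p_odd : odd p).

Let p_gt0 : (0 < p)%N := prime_gt0 p_prime.

Let p_halfE : p = (2 * p./2).+1.
Proof. by have := odd_double_half p; rewrite p_odd add1n mul2n. Qed.

Local Notation sigma := (label_sign p).

Lemma legendre_modn s : legendre p s = legendre p (s %% p).
Proof. by rewrite /legendre /qres /dvdn !modn_mod. Qed.

Lemma label_sign_modn s : sigma s = sigma (s %% p).
Proof. by rewrite /label_sign legendre_modn. Qed.

Lemma label_signE s : sigma s = legendre p s - (p %| s)%N%:R.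
Proof. by rewrite /label_sign /legendre; case: (p %| s)%N; case: qres. Qed.

Lemma half_sq_subproof (x : 'I_p./2) : (x.+1 ^ 2 %% p < p)%N.
Proof. exact: ltn_pmod. Qed.

Definition half_sq (x : 'I_p./2) : 'I_p := Ordinal (half_sq_subproof x).

(* [(y + 1)^2 - (x + 1)^2 = (y - x) (y + x + 2)] and both factors lie in [(0, p)]. *)
Lemma half_sq_inj : injective half_sq.
Proof.
suff le_eq (x y : 'I_p./2) : (x <= y)%N -> half_sq x = half_sq y -> x = y.
  by move=> x y; case: (leqP x y) => [/le_eq//|/ltnW/le_eq eq_yx /esym/eq_yx].
move=> le_xy /(congr1 val) /= /eqP; rewrite eq_sym eqn_mod_dvd ?leq_exp2r //.
rewrite subn_sqr Euclid_dvdM // => dvd_p; apply/val_inj/eqP; rewrite eqn_leq le_xy /=.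
have x_lt := ltn_ord x; have y_lt := ltn_ord y.
have := p_halfE; case/orP: dvd_p => /dvdn_leq; lia.
Qed.

Definition residue_set : {set 'I_p} := [set s : 'I_p | legendre p s == 1].

Lemma residue_setE : residue_set = half_sq @: 'I_p./2.
Proof.
have half_lt (x : 'I_p./2) : (x.+1 < p)%N by have := ltn_ord x; have := p_halfE; lia.
apply/setP => s; rewrite inE; apply/idP/imsetP => [|[x _ ->]]; last first.
  rewrite /= -legendre_modn /legendre Euclid_dvdX // /dvdn modn_small ?half_lt //=.
  by rewrite ifT //; apply/existsP; exists (Ordinal (half_lt x)).
rewrite /legendre; case: ifP => // s_ndvd; case: ifP => // /existsP[y /eqP y_sq] _.
rewrite (modn_small (ltn_ord s)) in y_sq.
have y_gt0 : (0 < y)%N.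
  by rewrite lt0n; apply/eqP => y0; move: s_ndvd; rewrite /dvdn -y_sq y0 mul0n !mod0n.
have y_lt := ltn_ord y.
case: (leqP y p./2) => [y_le | y_gt].
- have x_lt : (y.-1 < p./2)%N by lia.
  by exists (Ordinal x_lt) => //; apply/val_inj; rewrite /= prednK.
- have x_lt : ((p - y).-1 < p./2)%N by have := p_halfE; lia.
  exists (Ordinal x_lt) => //; apply/val_inj; rewrite /= prednK; last by lia.
  by rewrite sqrBn_mod ?y_sq // ltnW.
Qed.

Lemma card_residue_set : #|residue_set| = p./2.
Proof. by rewrite residue_setE card_imset ?card_ord //; apply: half_sq_inj. Qed.

Lemma sum_label_sign_ord : \sum_(s < p) sigma s = -1.
Proof.
rewrite (bigID (mem residue_set)) /=.
rewrite (eq_bigr (fun=> 1)) => [|s]; last by rewrite inE /label_sign => ->.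
rewrite [X in _ + X](eq_bigr (fun=> -1)) => [|s]; last first.
  by rewrite inE /label_sign => /negbTE ->.
have := cardC residue_set; rewrite card_ord card_residue_set => card_nonres.
rewrite !sumr_const card_residue_set (@eq_card _ _ [predC residue_set]) //.
rewrite mulNrn; move: card_nonres p_halfE; move: #|_| p./2 => nonres h; lia.
Qed.

Lemma sum_label_sign_affine c k :
  ~~ (p %| k)%N -> \sum_(i < p) sigma (c + k * i) = -1.
Proof.
move=> k_ndvd; pose red (i : 'I_p) : 'I_p := Ordinal (ltn_pmod (c + k * i) p_gt0).
have red_inj : injective red.
  suff le_eq (i j : 'I_p) : (i <= j)%N -> red i = red j -> i = j.
    by move=> i j; case: (leqP i j) => [/le_eq//|/ltnW/le_eq eq_ji /esym/eq_ji].
  move=> le_ij /(congr1 val) /= /eqP.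
  rewrite eqn_modDl eq_sym eqn_mod_dvd ?leq_mul2l ?le_ij ?orbT //.
  rewrite -mulnBr Euclid_dvdM // (negbTE k_ndvd) /= => /dvdn_leq dvd_le.
  apply/val_inj/eqP; rewrite eqn_leq le_ij /=.
  by case: (posnP (j - i)) => [|/dvd_le]; have := ltn_ord j; lia.
rewrite -sum_label_sign_ord [RHS](reindex_inj red_inj) /=.
by apply: eq_bigr => i _; rewrite label_sign_modn.
Qed.

Lemma sum_label_sign_shift c : \sum_(i < p) sigma (c + i) = -1.
Proof.
rewrite -(sum_label_sign_affine c 1); last first.
  by rewrite dvdn1 neq_ltn prime_gt1 ?orbT.
by apply: eq_bigr => i _; rewrite mul1n.
Qed.

Lemma square_sum_addp m : square_sum sigma (m + p) = square_sum sigma m - m%:R - (m + p)%:R.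
Proof.
rewrite /square_sum big_split_ord /= [X in _ + X]exchange_big /=.
have row a : \sum_(i < p) sigma (a.+1 + (m + i).+1) = -1.
  by rewrite -(sum_label_sign_shift (a + m).+2); apply: eq_bigr => i _; congr sigma; lia.
have col b : \sum_(i < p) sigma ((m + i).+1 + b.+1) = -1.
  by rewrite -(sum_label_sign_shift (b + m).+2); apply: eq_bigr => i _; congr sigma; lia.
under eq_bigr do rewrite big_split_ord /= row.
under [X in _ + X]eq_bigr do rewrite col.
by rewrite big_split /= !sumr_const !card_ord !mulNrn.
Qed.

Lemma diag_sum_addp m : diag_sum sigma (m + p) = diag_sum sigma m - 1.
Proof.
rewrite /diag_sum big_split_ord /= -(sum_label_sign_affine (2 * m).+2 2).
  by congr (_ + _); apply: eq_bigr => i _; congr sigma; lia.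
by apply/negP => /dvdn_leq; have := prime_gt1 p_prime; have := odd_gt2 p_odd; lia.
Qed.

Lemma pair_sum_addp m : pair_sum sigma (m + p) = pair_sum sigma m - (2 * m + p)%N%:R + 1.
Proof. by rewrite !pair_sumE square_sum_addp diag_sum_addp; lia. Qed.

Lemma pair_sum_addMp r q :
  pair_sum sigma (r + q * p) = pair_sum sigma r - (2 * r * q + p * q ^ 2)%N%:R + q%:R.
Proof.
elim: q => [|q IHq]; first by rewrite mul0n addn0; lia.
by rewrite mulSn addnCA addnC pair_sum_addp IHq; lia.
Qed.

Lemma sum_pair_count_dvdn r : (r < p)%N ->
  \sum_(2 <= s < (2 * r).+2) pair_count r s * (p %| s)%N%:R =
  Num.max 0 ((2 * r)%:Z - p%:Z + 1).
Proof.
move=> r_lt; have p_gt1 := prime_gt1 p_prime.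
have dvdn_small s : (0 < s < 2 * p)%N -> (p %| s)%N = (s == p).
  case/andP=> s_gt0 s_lt; apply/idP/eqP => [/dvdnP[k s_eq]|->]; last exact: dvdnn.
  by move: s_gt0 s_lt; rewrite {}s_eq; case: k => [|[|k]]; lia.
have other_terms s : s \in index_iota 2 (2 * r).+2 -> s != p ->
    pair_count r s * (p %| s)%N%:R = 0.
  by rewrite mem_index_iota => s_in /negbTE s_neq; rewrite dvdn_small ?s_neq ?mulr0 //; lia.
case: (ltnP p (2 * r).+2) => [p_lt | p_ge].
- have p_in : p \in index_iota 2 (2 * r).+2 by rewrite mem_index_iota; lia.
  rewrite (bigD1_seq (op := +%R) p) ?iota_uniq //=.
  rewrite big1_seq ?addr0 => [|s /andP[s_neq /other_terms]]; last exact.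
  rewrite dvdnn mulr1 /pair_count /delta p_odd subr0 max_r; last by lia.
  by case: leqP; lia.
- rewrite big1_seq => [|s /andP[_ s_in]]; first by rewrite max_l //; lia.
  by apply: other_terms => //; apply: contraTneq s_in => ->; rewrite mem_index_iota; lia.
Qed.

Lemma S1_add_S2_pair_sum r : (r < p)%N ->
  S1 p r + S2 p r = pair_sum sigma r + Num.max 0 ((2 * r)%:Z - p%:Z + 1).
Proof.
move=> r_lt; rewrite S1_add_S2 pair_sum_count -(sum_pair_count_dvdn _ r_lt).
by rewrite -big_split; apply: eq_bigr => s _; rewrite /= label_signE mulrBr subrK.
Qed.
End LabelSign.

Lemma sum_neq_lt n (R : nmodType) (F : 'I_n -> 'I_n -> R) :
  (forall u v, F u v = F v u) ->
  \sum_(u : 'I_n) \sum_(v : 'I_n | u != v) F u v =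
  (\sum_(u : 'I_n) \sum_(v : 'I_n | (u < v)%N) F u v) *+ 2.
Proof.
move=> F_sym.
have swap : \sum_(u : 'I_n) \sum_(v : 'I_n | (u < v)%N) F u v =
            \sum_(u : 'I_n) \sum_(v : 'I_n | (v < u)%N) F u v.
  rewrite (exchange_big_dep xpredT) //=; apply: eq_bigr => u _.
  by apply: eq_bigr => v _; apply: F_sym.
rewrite mulr2n {2}swap -big_split; apply: eq_bigr => u _ /=.
rewrite (bigID (fun v : 'I_n => (u < v)%N)) /=; congr (_ + _); apply: eq_bigl => v.
  by rewrite -val_eqE; case: ltngtP.
by rewrite -val_eqE; case: ltngtP.
Qed.

Lemma edge_count_subn p n (e : rel 'I_n) (f : {perm 'I_n}) :
  (edge_count p e f true)%:Z - (edge_count p e f false)%:Z =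
  \sum_(u : 'I_n) \sum_(v : 'I_n | (u < v)%N && e u v) label_sign p ((f u).+1 + (f v).+1).
Proof.
have count b : (edge_count p e f b)%:Z =
    \sum_(u : 'I_n) \sum_(v : 'I_n | (u < v)%N && e u v) (edge_label p f u v == b)%:R.
  rewrite pair_big_dep /= -natr_sum natz; congr Posz.
  rewrite /edge_count -sum1_card [LHS]big_mkcond [RHS]big_mkcond /=.
  by apply: eq_bigr => -[u v] _; rewrite inE /=; case: (u < v)%N; case: (e u v); case: (_ == b).
rewrite !count -sumrB; apply: eq_bigr => u _; rewrite -sumrB; apply: eq_bigr => v _.
by rewrite /edge_label /label_sign; case: (legendre _ _ == _).
Qed.

Lemma edge_count_complete_subn p n (f : {perm 'I_n}) :
  ((edge_count p (complete_graph n) f true)%:Z -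
   (edge_count p (complete_graph n) f false)%:Z) *+ 2 = pair_sum (label_sign p) n.
Proof.
have lt_complete (u v : 'I_n) : (u < v)%N && complete_graph n u v = (u < v)%N.
  by apply/andb_idr => lt_uv; apply: contraTneq lt_uv => ->; rewrite ltnn.
rewrite edge_count_subn; under eq_bigr do rewrite (eq_bigl _ _ (lt_complete _)).
rewrite -sum_neq_lt => [|u v]; last by rewrite addnC.
rewrite /pair_sum [RHS](reindex_inj (@perm_inj _ f)) /=; apply: eq_bigr => u _.
rewrite [RHS](reindex_inj (@perm_inj _ f)) /=; apply: eq_bigl => v.
by rewrite (inj_eq perm_inj).
Qed.

Lemma legendre_cordial_labeling_completeE p n (f : {perm 'I_n}) :
  legendre_cordial_labeling p (complete_graph n) f =
  [|| pair_sum (label_sign p) n == -2, pair_sum (label_sign p) n == 0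
    | pair_sum (label_sign p) n == 2].
Proof. by rewrite /legendre_cordial_labeling -(edge_count_complete_subn p n f); lia. Qed.

Theorem theorem3p3 (p n : nat) (hp : prime p) (hodd : odd p) (hn : (1 <= n)%N) :
  let q := (n %/ p)%N in
  let r := (n - q * p)%N in
  let psi : int := Num.max 0%R ((2 * r)%:Z - p%:Z + 1)%R in
  let S : int := (S1 p r + S2 p r)%R in
  let X : int := ((2 * n * q)%:Z - (p * q ^ 2)%:Z - q%:Z + psi)%R in
  legendre_cordial p (complete_graph n) <->
  (S = X \/ S = (X + 2)%R \/ S = (X - 2)%R).
Proof.
move=> q r psi S X.
have r_mod : r = (n %% p)%N by rewrite /r /q {1}(divn_eq n p) addKn.
have n_eq : n = (r + q * p)%N by rewrite r_mod addnC -divn_eq.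
have r_lt : (r < p)%N by rewrite r_mod ltn_mod prime_gt0.
have S_eq : S = X + pair_sum (label_sign p) n.
  by rewrite /S S1_add_S2_pair_sum // n_eq pair_sum_addMp // /X /psi {1}n_eq; lia.
rewrite S_eq; split => [[f]|S_near_X]; last exists 1%g;
  by rewrite legendre_cordial_labeling_completeE; lia.
Qed.
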